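(* Let $\mathcal H$ be a real Hilbert space, let $f:\mathcal H\to\mathbb R$ be convex and twice continuously differentiable with $\operatorname{argmin}_{\mathcal H} f\neq\emptyset$, let $t_0>0$, $\alpha>3$ and $\beta\ge 0$. Let $u:[t_0,+\infty[\to\mathcal H$ be a classical solution of $$\text{(TOGES-VH)}\quad \dddot u(t)+\frac{\alpha+7}{t}\ddot u(t)+\frac{5(\alpha+1)}{t^2}\dot u(t)+\beta\,\nabla^2 f\Big(u(t)+\tfrac14 t\dot u(t)\Big)\Big(\tfrac54\dot u(t)+\tfrac14 t\ddot u(t)\Big)+\nabla f\Big(u(t)+\tfrac14 t\dot u(t)\Big)=0 .$$ Fix $z\in\operatorname{argmin}_{\mathcal H}f$ and define, for $t\ge t_0$, $$E(t)=4(t^3-2\beta t^2)\Big(f\big(u(t)+\tfrac14 t\dot u(t)\big)-\inf_{\mathcal H}f\Big)+\frac12\Big\|t^2\Big(\ddot u(t)+\beta\nabla f\big(u(t)+\tfrac14 t\dot u(t)\big)\Big)+(\alpha+5)t\dot u(t)+4\alpha(u(t)-z)\Big\|^2 .$$ Let $t_1:=\max\Big\{t_0,\ \frac{2\beta(\alpha-2)}{\alpha-3}\Big\}$ and $F(u(t_1)):=f(u(t_1))-\inf_{\mathcal H}f$. Then: (i) for all $t\ge t_1$, $$f\big(u(t)+\tfrac14 t\dot u(t)\big)-\inf_{\mathcal H} f\le \frac{(\alpha-2)E(t_1)}{4t^3},$$ $$f(u(t))-\inf_{\mathcal H}f\le \big(t_1^4F(u(t_1))-(\alpha-2)E(t_1)\,t_1\big)\frac{1}{t^4}+\frac{(\alpha-2)E(t_1)}{t^3},$$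 and the function $t\mapsto f(u(t))+\frac{(\alpha-2)E(t_1)}{3t^3}$ is nonincreasing on $[t_1,+\infty[$; (ii) if moreover $\beta>0$, then $$\int_{t_1}^{+\infty} t^4\Big\|\nabla f\big(u(t)+\tfrac14 t\dot u(t)\big)\Big\|^2\,dt\le\frac{(\alpha-2)E(t_1)}{\beta}.$$
   Context: $\nabla^2 f(x)\in\mathcal L(\mathcal H,\mathcal H)$ denotes the Hessian of $f$ at $x$, and $\nabla^2 f(x)(\xi)$ its action on $\xi\in\mathcal H$. $\dot u,\ddot u,\dddot u$ are time derivatives of $u$. *)

From HB Require Import structures.
From mathcomp Require Import all_boot all_order all_algebra.
From mathcomp Require Import all_classical all_reals all_analysis.
Set Implicit Arguments. Unset Strict Implicit. Unset Printing Implicit Defensive.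
Import Order.TTheory GRing.Theory Num.Theory.
Import numFieldNormedType.Exports.
Local Open Scope classical_set_scope.
Local Open Scope ring_scope.

(* A real Hilbert space is modelled as a complete normed space H over R
   together with an inner product ip inducing its norm. *)
Definition is_inner_product (R : realType) (H : normedModType R)
    (ip : H -> H -> R) : Prop :=
  [/\ (forall x y, ip x y = ip y x),
      (forall (a : R) x y z, ip (a *: x + y) z = a * ip x z + ip y z)
    & (forall x, ip x x = `|x| ^+ 2)].

Definition is_gradient (R : realType) (H : normedModType R)
    (ip : H -> H -> R) (f : H -> R) (g : H -> H) : Prop :=
  forall x, differentiable f x /\ (forall h, 'd f x h = ip (g x) h).

Definition hessian (R : realType) (H : normedModType R) (g : H -> H)
    (x : H) (xi : H) : H := 'd g x xi.

Definition C2_with_gradient (R : realType) (H : normedModType R)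
    (ip : H -> H -> R) (f : H -> R) (g : H -> H) : Prop :=
  is_gradient ip f g /\ (forall x, differentiable g x) /\
  (forall x (e : R), 0 < e -> exists2 d : R, 0 < d &
     forall y, `|y - x| < d -> forall h, `|'d g y h - 'd g x h| <= e * `|h|).

Definition convex_fun (R : realType) (H : normedModType R) (f : H -> R) :=
  forall (a : R) (x y : H), 0 <= a -> a <= 1 ->
    f (a *: x + (1 - a) *: y) <= a * f x + (1 - a) * f y.

Definition is_argmin (R : realType) (H : normedModType R) (f : H -> R) (z : H) :=
  forall x, f z <= f x.

Definition inf_f (R : realType) (H : normedModType R) (f : H -> R) : R :=
  inf (range f).

Definition wpt (R : realType) (H : normedModType R) (u : R -> H) (t : R) : H :=
  u t + (t / 4) *: ((derive1 u) t).

(* Classical solution of (TOGES-VH) on [t0, +oo[ : u is C^3 there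
   (u is given on R; only its behaviour on [t0,+oo[ matters) and the
   equation holds at every t >= t0. *)
Definition toges_vh_solution (R : realType) (H : normedModType R)
    (g : H -> H) (alpha beta t0 : R) (u : R -> H) : Prop :=
  forall t, t0 <= t ->
    [/\ derivable u t 1, derivable (derive1 u) t 1, derivable (derive1n 2 u) t 1,
        {for t, continuous (derive1n 3 u)} &
        (derive1n 3 u) t + ((alpha + 7) / t) *: (derive1n 2 u) t
        + ((5 * (alpha + 1)) / t ^+ 2) *: (derive1 u) t
        + beta *: hessian g (wpt u t) ((5 / 4) *: (derive1 u) t + (t / 4) *: (derive1n 2 u) t)
        + g (wpt u t) = 0].

Definition energy (R : realType) (H : normedModType R) (f : H -> R)
    (g : H -> H) (alpha beta : R) (z : H) (u : R -> H) (t : R) : R :=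
  4 * (t ^+ 3 - 2 * beta * t ^+ 2) * (f (wpt u t) - inf_f f)
  + 2^-1 * `| t ^+ 2 *: ((derive1n 2 u) t + beta *: g (wpt u t))
              + ((alpha + 5) * t) *: (derive1 u) t + (4 * alpha) *: (u t - z) | ^+ 2.

From HB Require Import structures.
From mathcomp Require Import all_boot all_order all_algebra.
From mathcomp Require Import all_classical all_reals all_analysis.
From mathcomp Require Import ring lra.
Import Order.TTheory GRing.Theory Num.Theory.
Import numFieldNormedType.Exports.
Local Open Scope classical_set_scope.
Local Open Scope ring_scope.
Set Implicit Arguments. Unset Strict Implicit. Unset Printing Implicit Defensive.

(* Write w(t) = u(t) + t/4 u'(t) and
     v(t) = t^2 (u''(t) + beta grad f(w(t))) + (alpha+5) t u'(t) + 4 alpha (u(t) - z),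
   so that E(t) = 4 (t^3 - 2 beta t^2) (f(w(t)) - inf f) + |v(t)|^2 / 2.
   - First, a small calculus of derivatives of curves R -> V through difference
     quotients ([der_at]): sums, products, chain rule, squared norm; a
     nonpositive derivative gives a nonincreasing function.
   - Convexity of f gives the gradient inequality f x + <grad f x, y - x> <= f y.
   - Along a solution, the equation says exactly v' = (2 beta t - t^2) grad f(w);
     with the gradient inequality at w towards z this yields, for t >= t1,
     E'(t) <= - beta/(alpha-2) t^4 |grad f(w(t))|^2.
   - Hence E is nonincreasing on [t1, +oo[, which bounds f(w(t)) - inf f.  The
     gradient inequality between u(t) and w(t) transfers this bound to f(u(t)),
     giving the two monotone quantities of part (i).
   - For (ii), E + beta/(alpha-2) \int_{t1}^T t^4 |grad f(w)|^2 is nonincreasing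
     in T; monotone convergence over [t1, t1 + n] concludes. *)

(* It is equivalent to [is_derive t 1 p d], but this
   form makes the differentiation rules below easy to prove and to chain. *)
Definition der_at {R : realType} {V : normedModType R} (p : R -> V) (t : R) (d : V) :=
  (fun h => h^-1 *: (p (h + t) - p t)) @ 0^' --> d.

Section CurveDerivative.
Context {R : realType} {V : normedModType R}.
Implicit Types (p q : R -> V) (t : R) (d dp dq : V).

Lemma der_at_is_derive p t d : der_at p t d -> is_derive t 1 p d.
Proof.
move=> dpt.
have E : (fun h : R => h^-1 *: ((p \o shift t) (h *: (1:R)) - p t)) =
         (fun h => h^-1 *: (p (h + t) - p t)).
  by apply/funext => h /=; rewrite [h *: 1]mulr1.
have dp : derivable p t 1 by rewrite /derivable E; exact: cvgP dpt.
by split => //; rewrite /derive E; exact: cvg_lim dpt.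
Qed.

Lemma is_derive_der_at p t d : is_derive t 1 p d -> der_at p t d.
Proof.
move=> [dp <-].
have E : (fun h : R => h^-1 *: ((p \o shift t) (h *: (1:R)) - p t)) =
         (fun h => h^-1 *: (p (h + t) - p t)).
  by apply/funext => h /=; rewrite [h *: 1]mulr1.
by rewrite /der_at -E; exact: dp.
Qed.

Lemma derivable_der_at p t : derivable p t 1 -> der_at p t (derive1 p t).
Proof. by move=> dp; apply: is_derive_der_at; rewrite derive1E; exact: derivableP. Qed.

Lemma der_at_derive1 p t d : der_at p t d -> derive1 p t = d.
Proof. by move=> /der_at_is_derive [_ <-]; rewrite derive1E. Qed.

Lemma der_at_derivable p t d : der_at p t d -> derivable p t 1.
Proof. by move=> /der_at_is_derive []. Qed.

Lemma der_at_cont p t d : der_at p t d -> (fun h => p (h + t)) @ 0^' --> p t.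
Proof.
move=> /der_at_derivable /derivable1P /derivable1_diffP /differentiable_continuous.
move=> /continuous_withinNx; rewrite scale0r add0r.
by under eq_fun do rewrite [_ *: 1]mulr1.
Qed.

Lemma der_at_eq p t d d' : der_at p t d -> d = d' -> der_at p t d'.
Proof. by move=> ? <-. Qed.

Lemma der_at_cst (c : V) t : der_at (fun _ => c) t 0.
Proof. by apply: is_derive_der_at; exact: is_derive_cst. Qed.

Lemma der_at_add p q t dp dq : der_at p t dp -> der_at q t dq ->
  der_at (fun s => p s + q s) t (dp + dq).
Proof.
move=> dpt dqt; rewrite /der_at.
have -> : (fun h : R => h^-1 *: (p (h + t) + q (h + t) - (p t + q t))) =
  (fun h => h^-1 *: (p (h + t) - p t) + h^-1 *: (q (h + t) - q t)).
  by apply/funext => h; rewrite -scalerDr addrACA opprD.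
exact: cvgD.
Qed.

Lemma der_at_opp p t dp : der_at p t dp -> der_at (fun s => - p s) t (- dp).
Proof.
move=> dpt; rewrite /der_at.
have -> : (fun h : R => h^-1 *: (- p (h + t) - - p t)) =
  (fun h => - (h^-1 *: (p (h + t) - p t))).
  by apply/funext => h; rewrite -scalerN opprB opprK addrC.
exact: cvgN.
Qed.

Lemma der_at_scale (k : R -> R) p t (dk : R) dp : der_at k t dk -> der_at p t dp ->
  der_at (fun s => k s *: p s) t (dk *: p t + k t *: dp).
Proof.
move=> dkt dpt; rewrite /der_at.
have -> : (fun h : R => h^-1 *: (k (h + t) *: p (h + t) - k t *: p t)) =
  (fun h => (h^-1 * (k (h + t) - k t)) *: p (h + t) + k t *: (h^-1 *: (p (h + t) - p t))).
  apply/funext => h; rewrite -scalerA (scalerA (k t)) mulrC -scalerA -scalerDr.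
  by congr (_ *: _); rewrite scalerBl scalerBr addrA subrK.
apply: cvgD; first exact: cvgZ dkt (der_at_cont dpt).
by apply: cvgZ => //; exact: cvg_cst.
Qed.

End CurveDerivative.

Section ScalarDerivative.
Context {R : realType}.

Lemma der_at_comp {V W : normedModType R} (F : V -> W) (p : R -> V) t dp :
  differentiable F (p t) -> der_at p t dp -> der_at (F \o p) t ('d F (p t) dp).
Proof.
move=> dF dpt.
have dpd : differentiable p t by apply/derivable1_diffP; exact: der_at_derivable dpt.
have dFp : differentiable (F \o p) t by exact: differentiable_comp.
have := derivable_der_at ((derivable1_diffP _ _).2 dFp).
by rewrite derive1E' // diff_comp // /= -derive1E' // (der_at_derive1 dpt).
Qed.

Lemma der_at_exp (n : nat) (t : R) : der_at (fun s : R => s ^+ n) t (n%:R * t ^+ n.-1).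
Proof. by have := derivable_der_at (@exprn_derivable R n t 1); rewrite exp_derive1. Qed.

Lemma der_at_id (t : R) : der_at (fun s : R => s) t 1.
Proof. by apply: is_derive_der_at; exact: is_derive_id. Qed.

Lemma der_at_mul (k l : R -> R) t dk dl : der_at k t dk -> der_at l t dl ->
  der_at (fun s => k s * l s) t (dk * l t + k t * dl).
Proof. exact: der_at_scale. Qed.

Lemma der_at_inv (k : R -> R) t dk : der_at k t dk -> k t != 0 ->
  der_at (fun s => (k s)^-1) t (- (k t) ^- 2 * dk).
Proof.
move=> dkt k0; have [dk1 dk2] := der_at_is_derive dkt.
apply: is_derive_der_at; split; first exact: derivableV.
by rewrite deriveV // dk2.
Qed.

Lemma der_at_nonincreasing (F dF : R -> R) a :
  (forall x, a <= x -> der_at F x (dF x)) -> (forall x, a < x -> dF x <= 0) ->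
  forall x y, a <= x -> x <= y -> F y <= F x.
Proof.
move=> dFx dF0; apply: ler0_derive1_nincry.
- move=> x; rewrite in_itv /= andbT => /ltW ax.
  exact: der_at_derivable (dFx x ax).
- move=> x; rewrite in_itv /= andbT => ax.
  by rewrite (der_at_derive1 (dFx x (ltW ax))); exact: dF0.
- apply: derivable_within_continuous => x; rewrite in_itv /= andbT => ax.
  exact: der_at_derivable (dFx x ax).
Qed.

End ScalarDerivative.

Section InnerProduct.
Context {R : realType} {H : normedModType R} (ip : H -> H -> R).
Hypothesis ip_inner : is_inner_product ip.

Lemma ipC x y : ip x y = ip y x.
Proof. by case: ip_inner. Qed.

Lemma ipDl x y z : ip (x + y) z = ip x z + ip y z.
Proof. by case: ip_inner => _ ipl _; have := ipl 1 x y z; rewrite scale1r mul1r. Qed.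

Lemma ip0l z : ip 0 z = 0.
Proof.
have := ipDl 0 0 z; rewrite addr0 => /eqP.
by rewrite -subr_eq0 opprD addrA subrr sub0r oppr_eq0 => /eqP.
Qed.

Lemma ipZl a x z : ip (a *: x) z = a * ip x z.
Proof. by case: ip_inner => _ ipl _; rewrite -[a *: x]addr0 ipl ip0l addr0. Qed.

Lemma ipNl x z : ip (- x) z = - ip x z.
Proof. by rewrite -scaleN1r ipZl mulN1r. Qed.

Lemma ipBl x y z : ip (x - y) z = ip x z - ip y z.
Proof. by rewrite ipDl ipNl. Qed.

Lemma ipDr x y z : ip z (x + y) = ip z x + ip z y.
Proof. by rewrite ipC ipDl !(ipC z). Qed.

Lemma ipZr a x z : ip z (a *: x) = a * ip z x.
Proof. by rewrite ipC ipZl ipC. Qed.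

Lemma ipNr x z : ip z (- x) = - ip z x.
Proof. by rewrite ipC ipNl ipC. Qed.

Lemma ipxx x : ip x x = `|x| ^+ 2.
Proof. by case: ip_inner. Qed.

Lemma ip_polar x y : ip x y = (`|x + y| ^+ 2 - `|x - y| ^+ 2) / 4.
Proof. by rewrite -!ipxx !ipDl !ipNl !ipDr !ipNr (ipC y x); field. Qed.

Lemma cvg_ip {T : Type} (F : set_system T) {FF : Filter F} (a b : T -> H) (la lb : H) :
  a @ F --> la -> b @ F --> lb -> (fun x => ip (a x) (b x)) @ F --> ip la lb.
Proof.
move=> ha hb; under eq_fun do rewrite ip_polar !expr2; rewrite ip_polar !expr2.
apply: cvgM; last exact: cvg_cst.
have hD : `|a x + b x| @[x --> F] --> `|la + lb| by apply: cvg_norm; exact: cvgD.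
have hB : `|a x - b x| @[x --> F] --> `|la - lb| by apply: cvg_norm; exact: cvgB.
by apply: cvgB; apply: cvgM.
Qed.

Lemma der_at_norm2 (p : R -> H) t dp : der_at p t dp ->
  der_at (fun s => `|p s| ^+ 2) t (2 * ip (p t) dp).
Proof.
move=> dpt; rewrite /der_at.
have -> : (fun h : R => h^-1 *: (`|p (h + t)| ^+ 2 - `|p t| ^+ 2)) =
  (fun h => ip (h^-1 *: (p (h + t) - p t)) (p (h + t) + p t)).
  apply/funext => h; rewrite -!ipxx ipZl ipBl !ipDr.
  by rewrite [h^-1 *: _]/(_ * _) (ipC (p t) (p (h + t))); congr (_ * _); ring.
have -> : 2 * ip (p t) dp = ip dp (p t + p t) by rewrite ipDr ipC; ring.
apply: cvg_ip => //; apply: cvgD; [exact: der_at_cont dpt | exact: cvg_cst].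
Qed.

End InnerProduct.

(* Gradient inequality of a differentiable convex function: the derivative
   of f along the segment [x, y] at x is below the slope f y - f x. *)
Lemma gradient_inequality {R : realType} {H : normedModType R} (ip : H -> H -> R)
    (f : H -> R) (g : H -> H) :
  convex_fun f -> is_gradient ip f g -> forall x y, f x + ip (g x) (y - x) <= f y.
Proof.
move=> cf gf x y.
pose p := fun s : R => x + s *: (y - x).
have dp0 : der_at p 0 (y - x).
  apply: der_at_eq (der_at_add (der_at_cst x 0)
                     (der_at_scale (der_at_id 0) (der_at_cst (y - x) 0))) _.
  by rewrite scale1r scale0r !addr0 add0r.
have p0 : p 0 = x by rewrite /p scale0r addr0.
have := der_at_comp (proj1 (gf (p 0))) dp0; rewrite p0 (proj2 (gf x)) => dfp.
rewrite addrC -lerBrDr.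
apply: (ler_cvg_to (cvg_dnbhs_at_right dfp) (cvg_cst _)).
near=> h.
have h0 : 0 < h by near: h; exact: nbhs_right_gt.
have h1 : h <= 1 by near: h; apply: nbhs_right_le; exact: ltr01.
rewrite /= addr0 p0 /p.
have := cf h y x (ltW h0) h1.
have -> : h *: y + (1 - h) *: x = x + h *: (y - x).
  by rewrite scalerBl scale1r scalerBr addrCA addrA.
move=> convex_h.
by rewrite [_ *: _]/(_ * _) ler_pdivrMl //; lra.
Unshelve. all: by end_near.
Qed.

Lemma inf_argmin {R : realType} {H : normedModType R} (f : H -> R) z :
  is_argmin f z -> inf_f f = f z.
Proof.
move=> hz; rewrite /inf_f; apply/eqP; rewrite eq_le; apply/andP; split.
- apply: ge_inf; last by exists z.
  by exists (f z) => _ [x _ <-]; exact: hz.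
- apply: lb_le_inf; first by exists (f z), z.
  by move=> _ [x _ <-]; exact: hz.
Qed.

(* Linear combinations of four fixed vectors: identities between such
   combinations reduce to identities between their real coefficients. *)
Section LinearCombination4.
Context {R : realType} {V : lmodType R} (a b c d : V).

Definition lc4 (x1 x2 x3 x4 : R) := x1 *: a + x2 *: b + x3 *: c + x4 *: d.

Lemma lc4D x1 x2 x3 x4 y1 y2 y3 y4 :
  lc4 x1 x2 x3 x4 + lc4 y1 y2 y3 y4 = lc4 (x1 + y1) (x2 + y2) (x3 + y3) (x4 + y4).
Proof.
rewrite /lc4 !scalerDl addrACA; congr (_ + _).
by rewrite addrACA; congr (_ + _); rewrite addrACA.
Qed.

Lemma lc4Z k x1 x2 x3 x4 : k *: lc4 x1 x2 x3 x4 = lc4 (k * x1) (k * x2) (k * x3) (k * x4).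
Proof. by rewrite /lc4 !scalerDr !scalerA. Qed.

Lemma lc4N x1 x2 x3 x4 : - lc4 x1 x2 x3 x4 = lc4 (- x1) (- x2) (- x3) (- x4).
Proof. by rewrite -scaleN1r lc4Z !mulN1r. Qed.

Lemma lc4_basis : [/\ a = lc4 1 0 0 0, b = lc4 0 1 0 0, c = lc4 0 0 1 0 & d = lc4 0 0 0 1].
Proof. by rewrite /lc4 !scale0r !scale1r !addr0 !add0r. Qed.

Lemma lc4_eq x1 x2 x3 x4 y1 y2 y3 y4 : x1 = y1 -> x2 = y2 -> x3 = y3 -> x4 = y4 ->
  lc4 x1 x2 x3 x4 = lc4 y1 y2 y3 y4.
Proof. by move=> -> -> -> ->. Qed.

End LinearCombination4.

(* The key algebraic identity: if x1, x2, x3 (= u', u'', u''') satisfy the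
   equation with gradient G and Hessian term Hs, the derivative of
   v = t^2 (u'' + b G) + (a+5) t u' + 4 a (u - z), as produced by the
   differentiation rules, equals (2 b t - t^2) G. *)
Lemma toges_v_derivative_identity {R : realType} {V : lmodType R}
    (t a b : R) (x1 x2 x3 G Hs uz : V) : t != 0 ->
  x3 + ((a + 7) / t) *: x2 + (5 * (a + 1) / t ^+ 2) *: x1 + b *: Hs + G = 0 ->
  (2 * t ^+ 2.-1) *: (x2 + b *: G) + t ^+ 2 *: (x3 + (0 *: G + b *: Hs)) +
  ((0 * t + (a + 5) * 1) *: x1 + ((a + 5) * t) *: x2) + (0 *: uz + (4 * a) *: (x1 - 0))
  = (2 * b * t - t ^+ 2) *: G.
Proof.
move=> t0 eq0.
have -> : x3 = - (((a + 7) / t) *: x2 + (5 * (a + 1) / t ^+ 2) *: x1 + b *: Hs + G).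
  by apply/eqP; rewrite -addr_eq0; apply/eqP; rewrite -eq0 !addrA.
rewrite !scale0r subr0 !add0r.
pose N := lc4 x1 x2 G Hs.
have [e1 e2 eG eH] : [/\ x1 = N 1 0 0 0, x2 = N 0 1 0 0, G = N 0 0 1 0 & Hs = N 0 0 0 1].
  exact: lc4_basis.
rewrite e1 e2 eG eH !(lc4Z, lc4D, lc4N).
by apply: lc4_eq; field.
Qed.

Section Toges.
Context {R : realType} {H : completeNormedModType R} (ip : H -> H -> R) (f : H -> R)
  (g : H -> H) (t0 alpha beta : R) (u : R -> H) (z : H).
Hypotheses (ip_inner : is_inner_product ip) (f_convex : convex_fun f)
  (f_C2 : C2_with_gradient ip f g) (t0_gt0 : 0 < t0) (alpha_gt3 : 3 < alpha)
  (beta_ge0 : 0 <= beta) (u_sol : toges_vh_solution g alpha beta t0 u)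
  (z_argmin : is_argmin f z).

Local Notation u1 := (derive1 u).
Local Notation u2 := (derive1 (derive1 u)).
Local Notation u3 := (derive1 (derive1 (derive1 u))).
Local Notation w := (wpt u).

Let g_grad : is_gradient ip f g := f_C2.1.
Let g_diff : forall x, differentiable g x := f_C2.2.1.
Let m := inf_f f.
Let mE : m = f z := inf_argmin z_argmin.
Let E := energy f g alpha beta z u.

Definition dw t := (5 / 4) *: u1 t + (t / 4) *: u2 t.

Definition v s := s ^+ 2 *: (u2 s + beta *: g (w s)) + ((alpha + 5) * s) *: u1 s
   + (4 * alpha) *: (u s - z).

Lemma energyE t :
  E t = 4 * (t ^+ 3 - 2 * beta * t ^+ 2) * (f (w t) - m) + 2^-1 * `|v t| ^+ 2.
Proof. by []. Qed.

Lemma f_gap_ge0 x : 0 <= f x - m.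
Proof. by rewrite mE subr_ge0; exact: z_argmin. Qed.

Lemma sol_at t : t0 <= t -> [/\ der_at u t (u1 t), der_at u1 t (u2 t), der_at u2 t (u3 t) &
   u3 t + ((alpha + 7) / t) *: u2 t + ((5 * (alpha + 1)) / t ^+ 2) *: u1 t
        + beta *: 'd g (w t) (dw t) + g (w t) = 0].
Proof.
move=> /u_sol [d1 d2 d3 _ eq0].
rewrite /derive1n /= /hessian /dw in d3 eq0.
by split; try exact: derivable_der_at.
Qed.

Lemma der_w t : t0 <= t -> der_at w t (dw t).
Proof.
move=> /sol_at [du du1 _ _].
have d_sum := der_at_add du
  (der_at_scale (der_at_mul (der_at_id t) (der_at_cst (4^-1 : R) t)) du1).
apply: der_at_eq d_sum _.
rewrite /dw mul1r mulr0 addr0 addrA; congr (_ + _).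
by rewrite -{1}(scale1r (u1 t)) -scalerDl; congr (_ *: _); field.
Qed.

Lemma der_v t : t0 <= t -> der_at v t ((2 * beta * t - t ^+ 2) *: g (w t)).
Proof.
move=> t0t; have [du du1 du2 eq0] := sol_at t0t.
have d_sum := der_at_add (der_at_add
    (der_at_scale (@der_at_exp R 2 t) (der_at_add du2
       (der_at_scale (der_at_cst beta t) (der_at_comp (g_diff (w t)) (der_w t0t)))))
    (der_at_scale (der_at_mul (der_at_cst (alpha + 5) t) (der_at_id t)) du1))
  (der_at_scale (der_at_cst (4 * alpha) t) (der_at_add du (der_at_opp (der_at_cst z t)))).
apply: der_at_eq d_sum _.
apply: toges_v_derivative_identity eq0.
by rewrite gt_eqF // (lt_le_trans t0_gt0 t0t).
Qed.

Definition dE t := 4 * (3 * t ^+ 2 - 4 * beta * t) * (f (w t) - m)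
  + 4 * (t ^+ 3 - 2 * beta * t ^+ 2) * ip (g (w t)) (dw t)
  + (2 * beta * t - t ^+ 2) * ip (v t) (g (w t)).

Lemma der_E t : t0 <= t -> der_at E t (dE t).
Proof.
move=> t0t.
have d_sum := der_at_add
  (der_at_mul (der_at_mul (der_at_cst (4:R) t)
       (der_at_add (@der_at_exp R 3 t)
          (der_at_opp (der_at_mul (der_at_cst (2 * beta) t) (@der_at_exp R 2 t)))))
    (der_at_add (der_at_comp (proj1 (g_grad (w t))) (der_w t0t))
       (der_at_opp (der_at_cst m t))))
  (der_at_mul (der_at_cst (2^-1:R) t) (der_at_norm2 ip_inner (der_v t0t))).
apply: der_at_eq d_sum _.
by rewrite /dE (proj2 (g_grad _)) /= (ipZr ip_inner); field.
Qed.

Definition t1 := Num.max t0 (2 * beta * (alpha - 2) / (alpha - 3)).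

Lemma t0_le_t1 : t0 <= t1.
Proof. by rewrite /t1 le_max lexx. Qed.

Lemma t1_facts t : t1 <= t ->
  [/\ t0 <= t, 0 < t & 0 <= t * (alpha - 3) - 2 * beta * (alpha - 2)].
Proof.
rewrite /t1 ge_max => /andP[h0 h1]; split => //; first exact: lt_le_trans t0_gt0 h0.
by rewrite subr_ge0 -ler_pdivrMr // subr_gt0.
Qed.

Lemma t_ge_2beta t : t1 <= t -> 0 <= t - 2 * beta.
Proof.
move=> /t1_facts [_ _ Kp].
have a3 : 0 < alpha - 3 by move: alpha_gt3; lra.
have e : (t - 2 * beta) * (alpha - 3) =
         (t * (alpha - 3) - 2 * beta * (alpha - 2)) + 2 * beta by ring.
by rewrite -(pmulr_lge0 _ a3) e; move: beta_ge0; lra.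
Qed.

(* Lyapunov inequality: E'(t) <= - beta/(alpha-2) t^4 |grad f(w(t))|^2 on [t1, +oo[.
   After expansion, E'(t) + beta/(alpha-2) t^4 |G|^2 is minus a sum of three
   nonnegative terms; one of them is the gradient inequality at w(t) towards z. *)
Lemma dE_le t : t1 <= t -> dE t <= - (beta / (alpha - 2)) * (t ^+ 4 * `|g (w t)| ^+ 2).
Proof.
move=> ht; have [_ tp Kp] := t1_facts ht; have tb := t_ge_2beta ht.
have gi := gradient_inequality f_convex g_grad (w t) z.
have F0 := f_gap_ge0 (w t).
rewrite -mE in gi.
rewrite /dE /v /dw (ipC ip_inner (_ + _)).
move: F0 gi; set G := g (w t); set F := f (w t) => F0 gi.
rewrite /wpt !(ipDr ip_inner, ipNr ip_inner, ipZr ip_inner) (ipxx ip_inner) in gi *.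
set a := ip G (u t) in gi *; set b := ip G z in gi *.
set c := ip G (u1 t) in gi *; set d := ip G (u2 t) in gi *.
set N := `|G| ^+ 2; set K := t * (alpha - 3) - 2 * beta * (alpha - 2) in Kp *.
have a2 : 0 < alpha - 2 by move: alpha_gt3; lra.
set P := a - b + t / 4 * c.
have PF : 0 <= P - (F - m) by rewrite /P; lra.
have -> : 4 * (3 * t ^+ 2 - 4 * beta * t) * (F - m) +
  4 * (t ^+ 3 - 2 * beta * t ^+ 2) * (5 / 4 * c + t / 4 * d) +
  (2 * beta * t - t ^+ 2) *
  (t ^+ 2 * (d + beta * N) + (alpha + 5) * t * c + 4 * alpha * (a - b)) =
  - (beta / (alpha - 2)) * (t ^+ 4 * N) - (4 * t * (F - m) * K
     + 4 * alpha * t * (t - 2 * beta) * (P - (F - m))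
     + beta * t ^+ 3 * N * K / (alpha - 2)).
  by rewrite /P /K; field; move: a2; lra.
rewrite lerBlDr lerDl.
have [t_ge0 al0] : 0 <= t /\ 0 <= alpha by move: alpha_gt3; split; lra.
apply: addr_ge0; first apply: addr_ge0.
- by rewrite !mulr_ge0.
- by rewrite !mulr_ge0.
- by rewrite divr_ge0 ?(ltW a2) // !mulr_ge0 // exprn_ge0.
Qed.

Lemma E_nonincreasing s t : t1 <= s -> s <= t -> E t <= E s.
Proof.
apply: (der_at_nonincreasing (dF := dE)).
- by move=> x hx; apply: der_E; exact: le_trans t0_le_t1 hx.
- move=> x hx; apply: le_trans (dE_le (ltW hx)) _.
  have [_ xp _] := t1_facts (ltW hx).
  rewrite mulNr oppr_le0; apply: mulr_ge0.
    by apply: divr_ge0 => //; move: alpha_gt3; lra.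
  by rewrite mulr_ge0 // exprn_ge0 // ltW.
Qed.

Lemma E_ge0 t : t1 <= t -> 0 <= E t.
Proof.
move=> ht; have [_ tp _] := t1_facts ht; have tb := t_ge_2beta ht.
have -> : E t = 4 * (t ^+ 2 * (t - 2 * beta)) * (f (w t) - m) + 2^-1 * `|v t| ^+ 2.
  by rewrite energyE; congr (_ * _ * _ + _); ring.
by rewrite addr_ge0 ?mulr_ge0 ?exprn_ge0 ?f_gap_ge0 // ltW.
Qed.

Lemma gap_w_bound t : t1 <= t -> f (w t) - m <= (alpha - 2) * E t1 / (4 * t ^+ 3).
Proof.
move=> ht; have [_ tp Kp] := t1_facts ht.
have F0 := f_gap_ge0 (w t).
have a2 : 0 < alpha - 2 by move: alpha_gt3; lra.
have t3 : 0 < 4 * t ^+ 3 by rewrite mulr_gt0 // exprn_gt0.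
set Fw := 4 * (t ^+ 3 - 2 * beta * t ^+ 2) * (f (w t) - m).
have hE : (alpha - 2) * Fw <= (alpha - 2) * E t1.
  rewrite ler_pM2l //; apply: le_trans (E_nonincreasing (lexx t1) ht).
  by rewrite energyE lerDl mulr_ge0 // exprn_ge0.
have hK : 0 <= 4 * t ^+ 2 * (t * (alpha - 3) - 2 * beta * (alpha - 2)) * (f (w t) - m).
  by rewrite !mulr_ge0 // ?exprn_ge0 // ltW.
have e : (alpha - 2) * Fw - (f (w t) - m) * (4 * t ^+ 3) =
  4 * t ^+ 2 * (t * (alpha - 3) - 2 * beta * (alpha - 2)) * (f (w t) - m).
  by rewrite /Fw; ring.
rewrite ler_pdivlMr //; lra.
Qed.

Lemma grad_u_ineq t : t / 4 * ip (g (u t)) (u1 t) <= f (w t) - f (u t).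
Proof.
have gi := gradient_inequality f_convex g_grad (u t) (w t).
rewrite /wpt (addrC (u t)) addrK (ipZr ip_inner) in gi.
by move: gi; rewrite /wpt addrC; lra.
Qed.

Lemma du_bound x : t1 <= x ->
  x ^+ 4 * ip (g (u x)) (u1 x) <= (alpha - 2) * E t1 - 4 * x ^+ 3 * (f (u x) - m).
Proof.
move=> hx; have [_ xp _] := t1_facts hx.
have x3 : 0 < 4 * x ^+ 3 by rewrite mulr_gt0 // exprn_gt0.
have hw : 4 * x ^+ 3 * (f (w x) - m) <= (alpha - 2) * E t1.
  by rewrite mulrC -ler_pdivlMr //; exact: gap_w_bound.
have hu : x ^+ 4 * ip (g (u x)) (u1 x) <= 4 * x ^+ 3 * (f (w x) - f (u x)).
  have -> : x ^+ 4 * ip (g (u x)) (u1 x) = 4 * x ^+ 3 * (x / 4 * ip (g (u x)) (u1 x)).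
    by field.
  by rewrite ler_pM2l // grad_u_ineq.
have e : 4 * x ^+ 3 * (f (w x) - f (u x)) =
         4 * x ^+ 3 * (f (w x) - m) - 4 * x ^+ 3 * (f (u x) - m) by ring.
lra.
Qed.

Lemma shifted_gap_u_nonincreasing s t : t1 <= s -> s <= t ->
  t ^+ 4 * (f (u t) - m) - (alpha - 2) * E t1 * t
  <= s ^+ 4 * (f (u s) - m) - (alpha - 2) * E t1 * s.
Proof.
pose KE := (alpha - 2) * E t1.
apply: (der_at_nonincreasing (F := fun x => x ^+ 4 * (f (u x) - m) - KE * x)
  (dF := fun x => 4 * x ^+ 3 * (f (u x) - m) + x ^+ 4 * ip (g (u x)) (u1 x) - KE)).
- move=> x hx; have [du _ _ _] := sol_at (le_trans t0_le_t1 hx).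
  have d_sum := der_at_add
    (der_at_mul (@der_at_exp R 4 x)
       (der_at_add (der_at_comp (proj1 (g_grad (u x))) du) (der_at_opp (der_at_cst m x))))
    (der_at_opp (der_at_mul (der_at_cst KE x) (der_at_id x))).
  apply: der_at_eq d_sum _.
  by rewrite (proj2 (g_grad _)) /=; field.
- by move=> x /ltW /du_bound; rewrite /KE; lra.
Qed.

Lemma gap_u_bound t : t1 <= t -> f (u t) - m <=
  (t1 ^+ 4 * (f (u t1) - m) - (alpha - 2) * E t1 * t1) / t ^+ 4
  + (alpha - 2) * E t1 / t ^+ 3.
Proof.
move=> ht; have [_ tp _] := t1_facts ht.
have h := shifted_gap_u_nonincreasing (lexx t1) ht.
have t4 : 0 < t ^+ 4 by rewrite exprn_gt0.
have -> : (alpha - 2) * E t1 / t ^+ 3 = (alpha - 2) * E t1 * t / t ^+ 4.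
  by field; rewrite gt_eqF.
by rewrite -mulrDl ler_pdivlMr // mulrC; lra.
Qed.

Lemma corrected_f_u_nonincreasing s t : t1 <= s -> s <= t ->
  f (u t) + (alpha - 2) * E t1 / (3 * t ^+ 3)
  <= f (u s) + (alpha - 2) * E t1 / (3 * s ^+ 3).
Proof.
pose KE := (alpha - 2) * E t1.
apply: (der_at_nonincreasing (F := fun x => f (u x) + KE / (3 * x ^+ 3))
  (dF := fun x => ip (g (u x)) (u1 x) - KE / x ^+ 4)).
- move=> x hx; have [du _ _ _] := sol_at (le_trans t0_le_t1 hx).
  have [_ xp _] := t1_facts hx.
  have nz : 3 * x ^+ 3 != 0 by rewrite mulf_neq0 // expf_neq0 // gt_eqF.
  have d_sum := der_at_add (der_at_comp (proj1 (g_grad (u x))) du)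
    (der_at_mul (der_at_cst KE x)
       (der_at_inv (der_at_mul (der_at_cst (3:R) x) (@der_at_exp R 3 x)) nz)).
  apply: der_at_eq d_sum _.
  by rewrite (proj2 (g_grad _)) /=; field; rewrite gt_eqF.
- move=> x hx; have [_ xp _] := t1_facts (ltW hx).
  have hd := du_bound (ltW hx).
  have m0 := f_gap_ge0 (u x).
  have x4 : 0 < x ^+ 4 by rewrite exprn_gt0.
  rewrite subr_le0 ler_pdivlMr // mulrC.
  have : 0 <= 4 * x ^+ 3 * (f (u x) - m) by rewrite !mulr_ge0 ?exprn_ge0 // ltW.
  rewrite /KE; lra.
Qed.

Definition weighted_grad2 s := s ^+ 4 * `|g (w s)| ^+ 2.

Lemma weighted_grad2_cont x : t0 <= x -> {for x, continuous weighted_grad2}.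
Proof.
move=> t0x.
have cw : {for x, continuous w}.
  apply: differentiable_continuous.
  exact: (derivable1_diffP _ _).1 (der_at_derivable (der_w t0x)).
have cgw : {for x, continuous (g \o w)}.
  exact: continuous_comp cw (differentiable_continuous (g_diff _)).
have cn : (fun s => `|g (w s)|) @ x --> `|g (w x)| by apply: cvg_norm; exact: cgw.
have cn2 : (fun s => `|g (w s)| ^+ 2) @ x --> `|g (w x)| ^+ 2.
  by under eq_fun do rewrite expr2; rewrite expr2; exact: cvgM.
have c4 : (fun s : R => s ^+ 4) @ x --> x ^+ 4 by exact: exprn_continuous.
exact: cvgM c4 cn2.
Qed.

Let mu := @lebesgue_measure R.

Lemma weighted_grad2_integrable T :
  t1 <= T -> mu.-integrable `[t1, T] (EFin \o weighted_grad2).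
Proof.
move=> hT; apply: continuous_compact_integrable; first exact: segment_compact.
apply: continuous_in_subspaceT => x; rewrite inE /= in_itv /= => /andP[h1 _].
exact: weighted_grad2_cont (le_trans t0_le_t1 h1).
Qed.

(* Part (ii) on a segment: since (E + c Phi)' <= 0 with c = beta/(alpha-2) and
   Phi(T) = \int_{t1}^T weighted_grad2, we get c Phi(T) <= E(t1) - E(T) <= E(t1). *)
Lemma weighted_grad2_segment_bound T : 0 < beta -> t1 <= T ->
  \int[mu]_(x in `[t1, T]) weighted_grad2 x <= (alpha - 2) * E t1 / beta.
Proof.
move=> bp hT.
have a2 : 0 < alpha - 2 by move: alpha_gt3; lra.
pose c := beta / (alpha - 2).
have cp : 0 < c by rewrite divr_gt0.
pose Phi x := \int[mu]_(s in `[t1, x]) weighted_grad2 s.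
have Phi1 : Phi t1 = 0 by rewrite /Phi set_itv1 Rintegral_set1.
suff : E T + c * Phi T <= E t1 + c * Phi t1.
  rewrite Phi1 mulr0 addr0 => h.
  have : c * Phi T <= E t1 by have := E_ge0 hT; lra.
  by rewrite mulrC -ler_pdivlMr // /c invf_div mulrA [E t1 * _]mulrC.
case: (ltgtP t1 T) hT => [tT _ | // | <- _]; last by rewrite lexx.
have iT := weighted_grad2_integrable (ltW tT).
have der_Phi x : t1 < x < T -> der_at Phi x (weighted_grad2 x).
  move=> /andP[h1 h2].
  have [dP eP] := continuous_FTC1_closed h2 iT h1
    (weighted_grad2_cont (le_trans t0_le_t1 (ltW h1))).
  by rewrite -eP; exact: derivable_der_at.
have der_sum x : t1 < x < T ->
    der_at (fun x => E x + c * Phi x) x (dE x + c * weighted_grad2 x).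
  move=> hx; have /andP[h1 _] := hx.
  apply: der_at_eq (der_at_add (der_E (le_trans t0_le_t1 (ltW h1)))
    (der_at_mul (der_at_cst c x) (der_Phi x hx))) _.
  by rewrite mul0r add0r.
apply: (@ler0_derive1_le_cc _ (fun x => E x + c * Phi x) t1 T).
- by move=> x; rewrite in_itv /= => hx; exact: der_at_derivable (der_sum x hx).
- move=> x; rewrite in_itv /= => hx; rewrite (der_at_derive1 (der_sum x hx)).
  have /andP[h1 _] := hx; have := dE_le (ltW h1).
  by rewrite /weighted_grad2 /c; lra.
- have cE : {within `[t1, T], continuous E}.
    apply: derivable_within_continuous => x; rewrite in_itv /= => /andP[h1 _].
    exact: der_at_derivable (der_E (le_trans t0_le_t1 h1)).
  have cP : {within `[t1, T], continuous Phi}.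
    exact: parameterized_integral_continuous (ltW tT) iT.
  move=> x; apply: continuousD; first exact: cE.
  by apply: continuousM; [exact: cst_continuous | exact: cP].
- by rewrite in_itv /= lexx ltW.
- by rewrite in_itv /= lexx ltW.
- exact: ltW.
Qed.

(* Part (ii): monotone convergence over the segments [t1, t1 + n]. *)
Lemma weighted_grad2_integral_bound : 0 < beta ->
  (\int[mu]_(x in `[t1, +oo[) (weighted_grad2 x)%:E <= ((alpha - 2) * E t1 / beta)%:E)%E.
Proof.
move=> bp.
have [_ t1p _] := t1_facts (lexx t1).
have t1n n : t1 <= t1 + n%:R by rewrite lerDl.
rewrite itv_bndy_bigcup_BRight.
apply: (cvge_le _ (ge0_nondecreasing_set_cvg_integral _ _ _ _)).
- apply: nearW => n /=.
  have iT := weighted_grad2_integrable (t1n n).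
  rewrite -(fineK (integrable_fin_num _ iT)) ?lee_fin; last exact: measurable_itv.
  exact: weighted_grad2_segment_bound.
- move=> a b ab; rewrite subsetEset; apply: subset_itvl.
  by rewrite bnd_simp lerD2l ler_nat.
- by move=> i; exact: measurable_itv.
- by move=> i; have /integrableP[] := weighted_grad2_integrable (t1n i).
- move=> i x; rewrite /= in_itv /= => /andP[h _].
  by rewrite lee_fin /weighted_grad2 mulr_ge0 ?exprn_ge0 // ltW // (lt_le_trans t1p h).
Qed.

End Toges.

Unset Implicit Arguments.
Theorem theorem3p1 (R : realType) (H : completeNormedModType R)
  (ip : H -> H -> R) (f : H -> R) (g : H -> H)
  (t0 alpha beta : R) (u : R -> H) (z : H) :
  is_inner_product ip ->
  convex_fun f -> C2_with_gradient ip f g ->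
  (exists x, is_argmin f x) ->
  0 < t0 -> 3 < alpha -> 0 <= beta ->
  toges_vh_solution g alpha beta t0 u ->
  is_argmin f z ->
  let E := energy f g alpha beta z u in
  let t1 := Num.max t0 (2 * beta * (alpha - 2) / (alpha - 3)) in
  (* (i) *)
  ((forall t, t1 <= t ->
      f (wpt u t) - inf_f f <= (alpha - 2) * E t1 / (4 * t ^+ 3)) /\
   (forall t, t1 <= t ->
      f (u t) - inf_f f <=
        (t1 ^+ 4 * (f (u t1) - inf_f f) - (alpha - 2) * E t1 * t1) / t ^+ 4
        + (alpha - 2) * E t1 / t ^+ 3) /\
   (forall s t, t1 <= s -> s <= t ->
      f (u t) + (alpha - 2) * E t1 / (3 * t ^+ 3)
      <= f (u s) + (alpha - 2) * E t1 / (3 * s ^+ 3))) /\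
  (* (ii) *)
  (0 < beta ->
     (\int[lebesgue_measure]_(t in `[t1, +oo[)
         ((t ^+ 4 * `| g (wpt u t) | ^+ 2)%:E)
      <= ((alpha - 2) * E t1 / beta)%:E)%E).
Proof.
move=> ip_inner f_convex f_C2 _ t0_gt0 alpha_gt3 beta_ge0 u_sol z_argmin E t1.
split; [split; [|split]|].
- exact: gap_w_bound ip_inner f_convex f_C2 t0_gt0 alpha_gt3 beta_ge0 u_sol z_argmin.
- exact: gap_u_bound ip_inner f_convex f_C2 t0_gt0 alpha_gt3 beta_ge0 u_sol z_argmin.
- exact: corrected_f_u_nonincreasing ip_inner f_convex f_C2 t0_gt0 alpha_gt3 beta_ge0
    u_sol z_argmin.
- exact: weighted_grad2_integral_bound ip_inner f_convex f_C2 t0_gt0 alpha_gt3 beta_ge0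
    u_sol z_argmin.
Qed.
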